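(* For any integers $q\ge 2$ and positive integers $w\le n$, there exists a $\mathrm{TOC}_q(n,2,w)$.
   Context: $\mathcal{H}_q(n,w)$ is the set of all words of length $n$ over $\mathbb{Z}_q$ with exactly $w$ nonzero entries, with the Hamming distance. An $(n,d,w)_q$-code is a nonempty subset of $\mathcal{H}_q(n,w)$ in which any two distinct words have Hamming distance at least $d$; $A_q(n,d,w)$ is the maximum size of such a code and a code of this size is optimal. A $\mathrm{TOC}_q(n,d,w)$ (tiling) is a partition of $\mathcal{H}_q(n,w)$ into mutually disjoint optimal $(n,d,w)_q$-codes. *)

From mathcomp Require Import all_boot.
Set Implicit Arguments. Unset Strict Implicit. Unset Printing Implicit Defensive.

(* Words of length n over Z_q, represented with symbols 'I_q = {0,...,q-1};
   the zero symbol is the one with value 0. *)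
Definition word (q n : nat) := {ffun 'I_n -> 'I_q}.

Definition wt (q n : nat) (x : word q n) : nat := #|[set i | nat_of_ord (x i) != 0]|.

Definition hdist (q n : nat) (x y : word q n) : nat := #|[set i | x i != y i]|.

Definition Hqnw (q n w : nat) : {set word q n} := [set x | wt x == w].

Definition is_code (q n d w : nat) (C : {set word q n}) : bool :=
  [&& C != set0, C \subset Hqnw q n w &
      [forall x in C, forall y in C, (x != y) ==> (d <= hdist x y)]].

Definition Aq (q n d w : nat) : nat :=
  \max_(C : {set word q n} | is_code d w C) #|C|.

Definition optimal_code (q n d w : nat) (C : {set word q n}) : bool :=
  is_code d w C && (#|C| == Aq q n d w).

Definition is_TOC (q n d w : nat) (P : {set {set word q n}}) : bool :=
  partition P (Hqnw q n w) && [forall C in P, optimal_code d w C].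

From mathcomp Require Import all_boot.
Set Implicit Arguments. Unset Strict Implicit. Unset Printing Implicit Defensive.

(* Two words of the same weight at Hamming distance 1 differ in one position
   where both are nonzero.  The nonzero symbols 1, ..., q-1 are pairwise
   incongruent modulo q-1, so the classes of H_q(n,w) under the sum of the
   entries modulo q-1 are codes of minimum distance 2.  Each class is optimal:
   overwriting the first nonzero entry of a word by the nonzero symbol that
   moves its checksum to a prescribed residue maps any distance-2 code of
   weight w injectively into that class, because two words with the same
   image agree outside one position. *)

Lemma optimal_code_max (q n d w : nat) (C : {set word q n}) :
  is_code d w C -> (forall C' : {set word q n}, is_code d w C' -> #|C'| <= #|C|) ->
  optimal_code d w C.
Proof.
move=> codeC maxC; rewrite /optimal_code codeC eqn_leq.
by rewrite (leq_bigmax_cond C) //=; apply/bigmax_leqP.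
Qed.

Section HammingDistance.
Variables q n : nat.
Implicit Types y z : word q n.

Lemma hdist_agree_le1 y z j :
  (forall i, i != j -> y i = z i) -> hdist y z <= 1.
Proof.
move=> yz; rewrite -(cards1 j); apply/subset_leq_card/subsetP => i.
by rewrite !inE; apply: contraR => /yz ->.
Qed.

Lemma hdist_le1_agree y z : y != z -> hdist y z <= 1 ->
  exists2 j, y j != z j & forall i, i != j -> y i = z i.
Proof.
move=> /eqP neq_yz /card_le1P dist_le1.
have [j yzj] : exists j, y j != z j.
  apply/existsP; apply: contra_notT neq_yz => /existsPn eq_yz.
  by apply/ffunP => i; apply/eqP/negPn/eq_yz.
exists j => // i ij; apply/eqP; apply: contraNT ij => yzi.
by rewrite -[_ == j](dist_le1 j) inE.
Qed.

Lemma code2_agree_eq w C y z j : is_code 2 w C -> y \in C -> z \in C ->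
  (forall i, i != j -> y i = z i) -> y = z.
Proof.
case/and3P=> _ _ /forallP distC yC zC /hdist_agree_le1 yz1.
apply/eqP; apply: contraT => neq_yz.
have /forallP := implyP (distC y) yC.
by move/(_ z)/implyP/(_ zC)/implyP/(_ neq_yz); rewrite leqNgt ltnS yz1.
Qed.

End HammingDistance.

Section ChecksumClasses.
Variables p n w : nat.
Local Notation q := p.+2.
Implicit Types (x y z : word q n) (a b : 'I_q).

Definition supp y : {set 'I_n} := [set i | nat_of_ord (y i) != 0].

Lemma wt_supp y : wt y = #|supp y|.
Proof. by []. Qed.

Definition checksum y : nat := (\sum_i nat_of_ord (y i)) %% p.+1.

Definition checksum_class x : {set word q n} :=
  [set y in Hqnw q n w | checksum x == checksum y].

Lemma nonzero_symbol_eq_mod a b : nat_of_ord a != 0 -> nat_of_ord b != 0 ->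
  a = b %[mod p.+1] -> a = b.
Proof.
move=> a0 b0 ab; apply: ord_inj; move: ab a0 b0 (ltn_ord a) (ltn_ord b).
case: (nat_of_ord a) => [|a'] //; case: (nat_of_ord b) => [|b'] // /eqP.
rewrite -(add1n a') -(add1n b') eqn_modDl => + _ _ a_lt b_lt.
by rewrite !modn_small // => /eqP ->.
Qed.

Lemma mem_supp_agree y z j : wt y = wt z ->
  (forall i, i != j -> y i = z i) -> (j \in supp y) = (j \in supp z).
Proof.
move=> wt_yz yz.
have supp_yz : #|supp y :\ j| = #|supp z :\ j|.
  by apply: eq_card => i; rewrite !inE; case: eqP => // /eqP /yz ->.
move/eqP: wt_yz; rewrite !wt_supp (cardsD1 j (supp y)) (cardsD1 j (supp z)).
by rewrite supp_yz eqn_add2r; case: (j \in supp y); case: (j \in supp z).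
Qed.

Lemma checksum_agree y z j : (forall i, i != j -> y i = z i) ->
  (checksum y == checksum z) = (y j == z j %[mod p.+1]).
Proof.
move=> yz; rewrite /checksum (bigD1 j (P := predT)) // (bigD1 j (P := predT)) //=.
by rewrite (eq_bigr (fun i => nat_of_ord (z i))) => [|i /yz ->]; rewrite ?eqn_modDr.
Qed.

Lemma checksum_class_code x : x \in Hqnw q n w -> is_code 2 w (checksum_class x).
Proof.
move=> xH; apply/and3P; split.
- by apply/set0Pn; exists x; rewrite inE xH eqxx.
- by apply/subsetP => y; rewrite inE => /andP[].
apply/forallP => y; apply/implyP; rewrite inE => /andP[yH /eqP csum_xy].
apply/forallP => z; apply/implyP; rewrite inE csum_xy => /andP[zH csum_yz].
apply/implyP => neq_yz; rewrite ltnNge; apply/negP.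
case/(hdist_le1_agree neq_yz) => j /eqP neq_yzj yz; apply: neq_yzj.
have wt_yz : wt y = wt z by move: yH zH; rewrite !inE => /eqP -> /eqP ->.
have supp_yzj := mem_supp_agree wt_yz yz.
move: csum_yz; rewrite (checksum_agree yz) => /eqP csum_yzj.
have [yj | yj] := boolP (j \in supp y); have := yj; rewrite supp_yzj; move: yj.
  by rewrite !inE => yj zj; apply: nonzero_symbol_eq_mod.
by rewrite !inE !negbK => /eqP yj /eqP zj; apply: ord_inj; rewrite yj zj.
Qed.

Definition lead y : option 'I_n := [pick i in supp y].

Definition set_entry y j a : word q n := [ffun i => if i == j then a else y i].

(* Its value v satisfies 1 <= v <= p.+1 and s + v = r + p.+1 * s.+1 modulo p.+1. *)
Definition completing_symbol (r s : nat) : 'I_q :=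
  inord ((r + p * s.+1) %% p.+1).+1.

Definition retarget (r : nat) y : word q n :=
  if lead y is Some j then
    set_entry y j (completing_symbol r (\sum_(i | i != j) nat_of_ord (y i)))
  else y.

Lemma completing_symbol_neq0 r s : nat_of_ord (completing_symbol r s) != 0.
Proof. by rewrite inordK // ltnS ltn_mod. Qed.

Lemma completing_symbolE r s : s + completing_symbol r s = r %[mod p.+1].
Proof.
rewrite inordK; last by rewrite ltnS ltn_mod.
by rewrite addnS -addSn modnDmr addnCA -mulSn addnC mulnC modnMDl.
Qed.

Lemma supp_set_entry y j a : j \in supp y -> nat_of_ord a != 0 ->
  supp (set_entry y j a) = supp y.
Proof.
move=> jy a0; apply/setP => i; rewrite !inE ffunE.
by have [-> | //] := eqVneq i j; rewrite a0; move: jy; rewrite inE.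
Qed.

Lemma supp_retarget r y : supp (retarget r y) = supp y.
Proof.
rewrite /retarget /lead; case: pickP => // j jy.
exact/supp_set_entry/completing_symbol_neq0.
Qed.

Lemma checksum_retarget r y : 0 < wt y -> checksum (retarget r y) = r %% p.+1.
Proof.
rewrite /retarget /lead; case: pickP => [j jy _ | no_supp]; last first.
  by rewrite wt_supp (eq_card0 no_supp).
rewrite /checksum (bigD1 j) //= ffunE eqxx addnC.
rewrite (eq_bigr (fun i => nat_of_ord (y i))) ?completing_symbolE //.
by move=> i /negbTE ij; rewrite ffunE ij.
Qed.

Lemma retarget_in_class x y : 0 < w -> y \in Hqnw q n w ->
  retarget (checksum x) y \in checksum_class x.
Proof.
rewrite !inE => w0 /eqP wt_y; rewrite checksum_retarget ?wt_y // modn_mod eqxx.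
by rewrite andbT wt_supp supp_retarget -wt_supp wt_y.
Qed.

Lemma retarget_inj_code r (C : {set word q n}) :
  is_code 2 w C -> {in C &, injective (retarget r)}.
Proof.
move=> codeC y z yC zC eq_yz.
have lead_yz : lead y = lead z.
  by rewrite /lead -(supp_retarget r y) -(supp_retarget r z) eq_yz.
move: eq_yz; rewrite /retarget -lead_yz; case: (lead y) => [j /ffunP eq_yz|] //.
apply: (code2_agree_eq (j := j) codeC yC zC) => i ij.
by have := eq_yz i; rewrite !ffunE (negbTE ij).
Qed.

Lemma checksum_class_max x (C : {set word q n}) :
  0 < w -> is_code 2 w C -> #|C| <= #|checksum_class x|.
Proof.
move=> w0 codeC.
rewrite -(card_in_imset (retarget_inj_code (r := checksum x) codeC)).
apply/subset_leq_card/subsetP => _ /imsetP[y yC ->]; apply: retarget_in_class => //.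
by case/and3P: codeC => _ /subsetP/(_ y yC).
Qed.

Lemma checksum_class_optimal x : 0 < w -> x \in Hqnw q n w ->
  optimal_code 2 w (checksum_class x).
Proof.
move=> w0 xH; apply: optimal_code_max (checksum_class_code xH) _ => C.
exact: checksum_class_max.
Qed.

End ChecksumClasses.

Theorem theorem3p6 (q n w : nat) :
  2 <= q -> 0 < w -> w <= n ->
  exists P : {set {set word q n}}, is_TOC 2 w P.
Proof.
case: q => [|[|p]] // _ w0 _.
exists (preim_partition (@checksum p n) (Hqnw p.+2 n w)).
apply/andP; split; first exact: preim_partitionP.
apply/forallP => C; apply/implyP => /imsetP[x xH ->].
exact: checksum_class_optimal.
Qed.
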